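(* Let $1\le m<n$, $\boldsymbol\xi=(\xi_1,\dots,\xi_{n-1})\in\mathbb Z_{\ge0}^{n-1}$ and $x,\Lambda_1,\dots,\Lambda_n\in\mathbb C$. (i) For any partition $\boldsymbol I=(I_{m+1},\dots,I_n)$ of $\{1,\dots,\xi_m\}$ with $\eta_s:=\eta_s(\boldsymbol I)\le\xi_s$ for $s=m+1,\dots,n-1$, and $\boldsymbol\eta=(\eta_{m+1},\dots,\eta_{n-1})$, $$\mathrm{Sym}_{\ddot{\boldsymbol t}}\Big[U_{\boldsymbol I}\big(\ddot{\boldsymbol t}_{[\boldsymbol\eta]};\boldsymbol t^m\big)L_{\boldsymbol\eta,\ddot{\boldsymbol\xi}}(\ddot{\boldsymbol t})\Big]=\prod_{s=m+1}^{n-1}\frac{1}{\eta_s!}\ \mathrm{Sym}_{\ddot{\boldsymbol t}}\Big[W_{\boldsymbol I}\big(\ddot{\boldsymbol t}_{[\boldsymbol\eta]};\boldsymbol t^m\big)L_{\boldsymbol\eta,\ddot{\boldsymbol\xi}}(\ddot{\boldsymbol t})\Big].$$ (ii) For any partition $\boldsymbol J=(J_1,\dots,J_m)$ of $\{1,\dots,\xi_m\}$ with $\zeta_s:=\zeta_s(\boldsymbol J)\le\xi_s$ for $s=1,\dots,m-1$, and $\boldsymbol\zeta=(\zeta_1,\dots,\zeta_{m-1})$, $$\mathrm{Sym}_{\dot{\boldsymbol t}}\Big[\widetilde U_{\boldsymbol J}\big(\dot{\boldsymbol t}_{(\dot{\boldsymbol\xi}-\boldsymbol\zeta,\dot{\boldsymbol\xi}]};\check{\boldsymbol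 t}^m\big)\widetilde L_{\boldsymbol\zeta,\dot{\boldsymbol\xi}}(\dot{\boldsymbol t})\Big]=\prod_{s=1}^{m-1}\frac{1}{\zeta_s!}\ \mathrm{Sym}_{\dot{\boldsymbol t}}\Big[\widetilde W_{\boldsymbol J}\big(\dot{\boldsymbol t}_{(\dot{\boldsymbol\xi}-\boldsymbol\zeta,\dot{\boldsymbol\xi}]};\check{\boldsymbol t}^m\big)\widetilde L_{\boldsymbol\zeta,\dot{\boldsymbol\xi}}(\dot{\boldsymbol t})\Big],$$ where $\check{\boldsymbol t}^m=(t^m_{\xi_m},\dots,t^m_1)$.
   Context: Notation. $E_{ab}$ denotes a matrix unit; entries of an operator $X$ on $(\mathbb{C}^k)^{\otimes r}$ are written $X^{a_1\dots a_r}_{b_1\dots b_r}$ (upper = row, lower = column). $A^{(i)}$ is $A$ acting in the $i$-th tensor factor; $(A\otimes B)^{(ij)}=A^{(i)}B^{(j)}$. $\prod^{\rightarrow}_{1\le i\le k}X_i=X_1\cdots X_k$, $\prod^{\leftarrow}_{1\le i\le k}X_i=X_k\cdots X_1$. $R^{\langle k\rangle}(u)=1+u^{-1}\sum_{a,b=1}^kE_{ab}\otimes E_{ba}$. $\mathrm{Sym}_{y_1,\dots,y_k}f=\sum_{\sigma\in S_k}f(y_{\sigma(1)},\dots,y_{\sigma(k)})$. Yangian. $Y(\mathfrak{gl}_k)$ is generated by $(T^a_b)^{\{s\}}$, $a,b\le k$, $s\ge1$, with $T^a_b(u)=\delta_{ab}+\sum_{s\ge1}(T^a_b)^{\{s\}}u^{-s}$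 and relations $(u-v)[T^a_b(u),T^c_d(v)]=T^a_d(u)T^c_b(v)-T^a_d(v)T^c_b(u)$; $T(u)=\sum E_{ab}\otimes T^a_b(u)$. Embeddings $\phi_m:Y(\mathfrak{gl}_m)\to Y(\mathfrak{gl}_n)$, $T^a_b(u)\mapsto T^a_b(u)$, and $\psi_{n-m}:Y(\mathfrak{gl}_{n-m})\to Y(\mathfrak{gl}_n)$, $T^a_b(u)\mapsto T^{a+m}_{b+m}(u)$. Bethe vectors. For $k\ge2$, $\boldsymbol\xi=(\xi_1,\dots,\xi_{k-1})\in\mathbb Z_{\ge0}^{k-1}$, $\xi^a=\xi_1+\dots+\xi_a$ ($\xi^0=0$), variables $\boldsymbol t^a=(t^a_1,\dots,t^a_{\xi_a})$, in $\mathrm{End}((\mathbb C^k)^{\otimes\xi^{k-1}})\otimes Y(\mathfrak{gl}_k)$ set $\mathbb T^{[j]}(\boldsymbol t^j)=\prod^{\rightarrow}_{1\le i\le\xi_j}T^{(\xi^{j-1}+i)}(t^j_i)$, $\mathbb R^{[i,j]}(\boldsymbol t^i,\boldsymbol t^j)=\prod^{\rightarrow}_{1\le p\le\xi_i}\prod^{\leftarrow}_{1\le l\le\xi_j}R^{(\xi^{i-1}+p,\,\xi^{j-1}+l)}(t^i_p-t^j_l)$, $\widehat{\mathbb T}_{\boldsymbol\xi}(\boldsymbol t)=\mathbb T^{[1]}\cdots\mathbb T^{[k-1]}\prod^{\leftarrow}_{1\le i\le k-1}\prod^{\leftarrow}_{1\le j<i}\mathbb R^{[i,j]}(\boldsymbol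 t^i,\boldsymbol t^j)$; $\mathbb B^{\langle k\rangle}_{\boldsymbol\xi}(\boldsymbol t)$ is its entry with upper indices ($a$ repeated $\xi_a$ times, $a=1,\dots,k-1$) and lower indices ($a+1$ repeated $\xi_a$ times); $\mathbb B^{\langle1\rangle}=1$. $\dot{\boldsymbol\xi}=(\xi_1,\dots,\xi_{m-1})$, $\ddot{\boldsymbol\xi}=(\xi_{m+1},\dots,\xi_{n-1})$, $\dot{\boldsymbol t}=(\boldsymbol t^1,\dots,\boldsymbol t^{m-1})$, $\ddot{\boldsymbol t}=(\boldsymbol t^{m+1},\dots,\boldsymbol t^{n-1})$, $\boldsymbol t^m=(t^m_1,\dots,t^m_{\xi_m})$; $\mathrm{Sym}_{\dot{\boldsymbol t}}$ ($\mathrm{Sym}_{\ddot{\boldsymbol t}}$) is the composition of $\mathrm{Sym}_{\boldsymbol t^a}$ over $a=1,\dots,m-1$ (over $a=m+1,\dots,n-1$). Weight functions. For a partition $\boldsymbol I=(I_{m+1},\dots,I_n)$ of $\{1,\dots,M\}$, $\eta_l(\boldsymbol I)=|\bigcup_{k=l+1}^nI_k|$ and $i^{(l)}_1<\dots<i^{(l)}_{\eta_l(\boldsymbol I)}$ are the elements of $\bigcup_{k=l+1}^nI_k$ ($l=m,\dots,n-1$); for variables $\boldsymbol v^l=(v^l_1,\dots,v^l_{\eta_l(\boldsymbol I)})$, $U_{\boldsymbol I}(\boldsymbol v^{m+1},\dots,\boldsymbol v^{n-1};\boldsymbol v^m)=\prod_{l=m+1}^{n-1}\prod_{a=1}^{\eta_l}\Big(\prod_{c:\,i^{(l-1)}_c=i^{(l)}_a}\frac{1}{v^l_a-v^{l-1}_c}\prod_{d:\,i^{(l-1)}_d>i^{(l)}_a}\frac{v^l_a-v^{l-1}_d+1}{v^l_a-v^{l-1}_d}\prod_{b=a+1}^{\eta_l}\frac{v^l_b-v^l_a+1}{v^l_b-v^l_a}\Big)$,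 and $W_{\boldsymbol I}=\mathrm{Sym}_{\boldsymbol v^{m+1}}\cdots\mathrm{Sym}_{\boldsymbol v^{n-1}}U_{\boldsymbol I}$. For a partition $\boldsymbol J=(J_1,\dots,J_m)$ of $\{1,\dots,M\}$, $\zeta_l(\boldsymbol J)=|\bigcup_{k=1}^lJ_k|$ and $j^{(l)}_1<\dots<j^{(l)}_{\zeta_l(\boldsymbol J)}$ are the elements of $\bigcup_{k=1}^lJ_k$ ($l=1,\dots,m$); for $\boldsymbol u^l=(u^l_1,\dots,u^l_{\zeta_l(\boldsymbol J)})$, $\widetilde U_{\boldsymbol J}(\boldsymbol u^1,\dots,\boldsymbol u^{m-1};\boldsymbol u^m)=\prod_{l=2}^{m}\prod_{a=1}^{\zeta_l}\Big(\prod_{c:\,j^{(l-1)}_c<j^{(l)}_a}\frac{u^l_a-u^{l-1}_c+1}{u^l_a-u^{l-1}_c}\prod_{d:\,j^{(l-1)}_d=j^{(l)}_a}\frac{1}{u^l_a-u^{l-1}_d}\prod_{b=a+1}^{\zeta_l}\frac{u^l_a-u^l_b+1}{u^l_a-u^l_b}\Big)$, and $\widetilde W_{\boldsymbol J}=\mathrm{Sym}_{\boldsymbol u^1}\cdots\mathrm{Sym}_{\boldsymbol u^{m-1}}\widetilde U_{\boldsymbol J}$. Arguments: $(\ddot{\boldsymbol t}_{[\boldsymbol\eta]};\boldsymbol t^m)$ means $\boldsymbol v^l=(t^l_1,\dots,t^l_{\eta_l})$ ($l>m$), $\boldsymbol v^m=\boldsymbol t^m$; $(\dot{\boldsymbol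 t}_{(\dot{\boldsymbol\xi}-\boldsymbol\zeta,\dot{\boldsymbol\xi}]};\check{\boldsymbol t}^m)$ means $\boldsymbol u^l=(t^l_{\xi_l-\zeta_l+1},\dots,t^l_{\xi_l})$ ($l<m$), $\boldsymbol u^m=\check{\boldsymbol t}^m$. Functions $L,\widetilde L$ ($Y(\mathfrak{gl}_n)$-valued). With $\ddot{\boldsymbol t}_{(\boldsymbol\eta,\ddot{\boldsymbol\xi}]}$ the groups $(t^b_{\eta_b+1},\dots,t^b_{\xi_b})$, $b=m+1,\dots,n-1$, and $\dot{\boldsymbol t}_{[\dot{\boldsymbol\xi}-\boldsymbol\zeta]}$ the groups $(t^a_1,\dots,t^a_{\xi_a-\zeta_a})$, $a=1,\dots,m-1$: $L_{\boldsymbol\eta,\ddot{\boldsymbol\xi}}(\ddot{\boldsymbol t})=\prod_{a=m+1}^{n-2}\prod_{i=1}^{\eta_{a+1}}\prod_{j=\eta_a+1}^{\xi_a}\frac{t^{a+1}_i-t^a_j+1}{t^{a+1}_i-t^a_j}\prod_{l=m+1}^{n-1}\prod_{i=1}^{\eta_l}\frac{t^l_i-x+\Lambda_l}{t^l_i-x}\ \psi_{n-m}\big(\mathbb B^{\langle n-m\rangle}_{\ddot{\boldsymbol\xi}-\boldsymbol\eta}(\ddot{\boldsymbol t}_{(\boldsymbol\eta,\ddot{\boldsymbol\xi}]})\big)$, $\widetilde L_{\boldsymbol\zeta,\dot{\boldsymbol\xi}}(\dot{\boldsymbol t})=\prod_{a=1}^{m-2}\prod_{i=1}^{\xi_{a+1}-\zeta_{a+1}}\prod_{j=\xi_a-\zeta_a+1}^{\xi_a}\frac{t^{a+1}_i-t^a_j+1}{t^{a+1}_i-t^a_j}\prod_{l=1}^{m-1}\prod_{i=0}^{\zeta_l-1}\frac{t^l_{\xi_l-i}-x+\Lambda_{l+1}}{t^l_{\xi_l-i}-x}\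 \phi_m\big(\mathbb B^{\langle m\rangle}_{\dot{\boldsymbol\xi}-\boldsymbol\zeta}(\dot{\boldsymbol t}_{[\dot{\boldsymbol\xi}-\boldsymbol\zeta]})\big)$. *)

From HB Require Import structures.
From mathcomp Require Import all_boot all_order all_algebra all_fingroup all_field.
Set Implicit Arguments. Unset Strict Implicit. Unset Printing Implicit Defensive.
Import Order.TTheory GRing.Theory Num.Theory.
Local Open Scope ring_scope.

Notation C := algC.

(* Families of variables: v a i = v^a_i (both indices 1-based). *)
Definition vars := nat -> nat -> C.

Definition pnat (k : nat) (s : 'S_k) (j : nat) : nat :=
  oapp (fun o : 'I_k => val (s o)) j (insub j).

Definition permv (a k : nat) (s : 'S_k) (v : vars) : vars :=
  fun b i => if (b == a) && (0 < i <= k)%N then v a (pnat s i.-1).+1 else v b i.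

Definition SymV (R : zmodType) (a k : nat) (F : vars -> R) : vars -> R :=
  fun v => \sum_(s : 'S_k) F (permv a s v).

Definition SymGroups (R : zmodType) (gs : seq (nat * nat)) (F : vars -> R) : vars -> R :=
  foldr (fun p G => SymV p.1 p.2 G) F gs.

(* ---------- operators on (C^k)^{(x) N} (x) A ---------- *)
Definition mi (N k : nat) := {ffun 'I_N -> 'I_k}.
Definition op (A : lalgType C) (N k : nat) := mi N k -> mi N k -> A.

Definition idop (A : lalgType C) N k : op A N k := fun r c => (r == c)%:R.
Definition mulop (A : lalgType C) N k (X Y : op A N k) : op A N k :=
  fun r c => \sum_(j : mi N k) X r j * Y j c.
Definition prodop (A : lalgType C) N k (l : seq (op A N k)) : op A N k :=
  foldr (@mulop A N k) (@idop A N k) l.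

(* value (0-based) of the multi-index r at the 0-based position p *)
Definition atn N k (r : mi N k) (p : nat) : nat :=
  oapp (fun i : 'I_N => val (r i)) 0%N (insub p).

(* T^{(p)}(u), with T a b u = T^a_b(u) (a, b 1-based); p 0-based position *)
Definition Tpos (A : lalgType C) N k (T : nat -> nat -> C -> A) (p : nat) (u : C)
  : op A N k :=
  fun r c => if [forall q : 'I_N, (val q != p) ==> (r q == c q)]
             then T (atn r p).+1 (atn c p).+1 u else 0.

(* R^{(p,q)}(u) = 1 + u^{-1} P^{(pq)} *)
Definition Rpos (A : lalgType C) N k (p q : nat) (u : C) : op A N k :=
  fun r c => ((r == c)%:R
      + u^-1 * ((atn r p == atn c q) && (atn r q == atn c p)
                && [forall y : 'I_N, ((val y != p) && (val y != q)) ==> (r y == c y)])%:R)%:A.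

Definition psum (xi : nat -> nat) (a : nat) : nat := (\sum_(1 <= b < a.+1) xi b)%N.
(* 0-based tensor position of the pair (j, i), i.e. xi^{j-1} + i - 1 *)
Definition posn (xi : nat -> nat) (j i : nat) : nat := (psum xi j.-1 + i.-1)%N.

Definition Tblock (A : lalgType C) N k (T : nat -> nat -> C -> A) (xi : nat -> nat)
  (t : vars) (j : nat) : op A N k :=
  prodop [seq @Tpos A N k T (posn xi j i) (t j i) | i <- iota 1 (xi j)].

Definition Rblock (A : lalgType C) N k (xi : nat -> nat) (t : vars) (i j : nat)
  : op A N k :=
  prodop (flatten [seq [seq @Rpos A N k (posn xi i p) (posn xi j l) (t i p - t j l)
                        | l <- rev (iota 1 (xi j))] | p <- iota 1 (xi i)]).

Definition That (A : lalgType C) (K : nat) (T : nat -> nat -> C -> A)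
  (xi : nat -> nat) (t : vars) : op A (psum xi K) K.+1 :=
  prodop ([seq @Tblock A (psum xi K) K.+1 T xi t j | j <- iota 1 K]
       ++ [seq @Rblock A (psum xi K) K.+1 xi t ij.1 ij.2
          | ij <- flatten [seq [seq (i, j) | j <- rev (iota 1 i.-1)]
                           | i <- rev (iota 1 K)]]).

(* 0-based block number minus one of a 0-based position x *)
Definition blk (xi : nat -> nat) (K x : nat) : nat :=
  count (fun a => psum xi a <= x)%N (iota 1 K).

Definition upper_idx (xi : nat -> nat) (K : nat) : mi (psum xi K) K.+1 :=
  [ffun x : 'I_(psum xi K) => inord (blk xi K x)].
Definition lower_idx (xi : nat -> nat) (K : nat) : mi (psum xi K) K.+1 :=
  [ffun x : 'I_(psum xi K) => inord (blk xi K x).+1].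

(* Bethe vector B^{<k>}_xi(t), built from the entries T a b (1 <= a,b <= k) *)
Definition Bethe (A : lalgType C) (k : nat) (T : nat -> nat -> C -> A)
  (xi : nat -> nat) (t : vars) : A :=
  match k with
  | 0 => 1
  | K.+1 => @That A K T xi t (upper_idx xi K) (lower_idx xi K)
  end.

(* partition I = (I_{m+1},..,I_n) of {1..M} given by labels lab j in {m+1..n} *)
Definition etaI (M : nat) (lab : nat -> nat) (l : nat) : nat :=
  count (fun j => l < lab j)%N (iota 1 M).
Definition iI (M : nat) (lab : nat -> nat) (l a : nat) : nat :=
  nth 0%N [seq j <- iota 1 M | (l < lab j)%N] a.-1.

Definition U_I (n m M : nat) (lab : nat -> nat) (v : vars) : C :=
  \prod_(m.+1 <= l < n) \prod_(1 <= a < (etaI M lab l).+1)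
   ( (\prod_(1 <= c < (etaI M lab l.-1).+1 | iI M lab l.-1 c == iI M lab l a)
        (v l a - v l.-1 c)^-1)
   * (\prod_(1 <= d < (etaI M lab l.-1).+1 | (iI M lab l a < iI M lab l.-1 d)%N)
        ((v l a - v l.-1 d + 1) / (v l a - v l.-1 d)))
   * (\prod_(a.+1 <= b < (etaI M lab l).+1)
        ((v l b - v l a + 1) / (v l b - v l a))) ).

Definition W_I (n m M : nat) (lab : nat -> nat) : vars -> C :=
  SymGroups [seq (l, etaI M lab l) | l <- iota m.+1 (n - m.+1)] (U_I n m M lab).

(* partition J = (J_1,..,J_m) of {1..M} given by labels jl j in {1..m} *)
Definition zetaJ (M : nat) (jl : nat -> nat) (l : nat) : nat :=
  count (fun j => jl j <= l)%N (iota 1 M).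
Definition jJ (M : nat) (jl : nat -> nat) (l a : nat) : nat :=
  nth 0%N [seq j <- iota 1 M | (jl j <= l)%N] a.-1.

Definition Ut_J (m M : nat) (jl : nat -> nat) (u : vars) : C :=
  \prod_(2 <= l < m.+1) \prod_(1 <= a < (zetaJ M jl l).+1)
   ( (\prod_(1 <= c < (zetaJ M jl l.-1).+1 | (jJ M jl l.-1 c < jJ M jl l a)%N)
        ((u l a - u l.-1 c + 1) / (u l a - u l.-1 c)))
   * (\prod_(1 <= d < (zetaJ M jl l.-1).+1 | jJ M jl l.-1 d == jJ M jl l a)
        (u l a - u l.-1 d)^-1)
   * (\prod_(a.+1 <= b < (zetaJ M jl l).+1)
        ((u l a - u l b + 1) / (u l a - u l b))) ).

Definition Wt_J (m M : nat) (jl : nat -> nat) : vars -> C :=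
  SymGroups [seq (l, zetaJ M jl l) | l <- iota 1 m.-1] (Ut_J m M jl).

(* the argument (dot t_{(xi - zeta, xi]} ; check t^m) *)
Definition argJ (m : nat) (xi zeta : nat -> nat) (t : vars) : vars :=
  fun l a => if (l < m)%N then t l (xi l - zeta l + a)%N
             else if l == m then t m (xi m + 1 - a)%N else t l a.

Definition Lddot (A : lalgType C) (n m : nat) (T : nat -> nat -> C -> A)
  (xi : nat -> nat) (x : C) (Lam : nat -> C) (eta : nat -> nat) (t : vars) : A :=
  ((\prod_(m.+1 <= a < n.-1) \prod_(1 <= i < (eta a.+1).+1)
      \prod_((eta a).+1 <= j < (xi a).+1)
        ((t a.+1 i - t a j + 1) / (t a.+1 i - t a j)))
   * (\prod_(m.+1 <= l < n) \prod_(1 <= i < (eta l).+1)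
        ((t l i - x + Lam l) / (t l i - x))))
  *: Bethe (n - m) (fun a b => T (a + m)%N (b + m)%N)
       (fun a => xi (a + m)%N - eta (a + m)%N)%N
       (fun a i => t (a + m)%N (eta (a + m)%N + i)%N).

Definition Ltilde (A : lalgType C) (m : nat) (T : nat -> nat -> C -> A)
  (xi : nat -> nat) (x : C) (Lam : nat -> C) (zeta : nat -> nat) (t : vars) : A :=
  ((\prod_(1 <= a < m.-1) \prod_(1 <= i < (xi a.+1 - zeta a.+1).+1)
      \prod_((xi a - zeta a).+1 <= j < (xi a).+1)
        ((t a.+1 i - t a j + 1) / (t a.+1 i - t a j)))
   * (\prod_(1 <= l < m) \prod_(0 <= i < zeta l)
        ((t l (xi l - i)%N - x + Lam l.+1) / (t l (xi l - i)%N - x))))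
  *: Bethe m T (fun a => xi a - zeta a)%N t.

From Pilot Require Import Defs.
From HB Require Import structures.
From mathcomp Require Import all_boot all_order all_algebra all_fingroup all_field.
From mathcomp Require Import zify.
From Stdlib Require Import FunctionalExtensionality.
Import Order.TTheory GRing.Theory Num.Theory.
Set Implicit Arguments. Unset Strict Implicit. Unset Printing Implicit Defensive.
Local Open Scope ring_scope.

(* Both identities are one fact about symmetrisation. In W_I (resp. in W~_J
   after the substitution argJ) the symmetrisation in group a runs over a
   window of eta_a consecutive variables among t^a_1, ..., t^a_xi_a: the first
   eta_a of them (resp. the last zeta_a). The factor L only sees the window
   variables through products symmetric in them, so the window symmetrisation
   passes through L. A permutation of the window extends to one of the whole
   group, so the outer symmetrisation over S_xi_a absorbs the inner one over
   S_eta_a, producing the factor eta_a!. *)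

Definition permv_win (a o k : nat) (s : 'S_k) (v : vars) : vars :=
  fun b i => if (b == a) && (o < i <= o + k)%N
             then v a (o + (Defs.pnat s (i - o.+1)).+1)%N else v b i.

Definition SymV_win (R : zmodType) (a o k : nat) (F : vars -> R) : vars -> R :=
  fun v => \sum_(s : 'S_k) F (permv_win a o s v).

Definition SymGroups_win (R : zmodType) (gs : seq (nat * nat * nat))
  (F : vars -> R) : vars -> R :=
  foldr (fun p G => SymV_win p.1.1 p.1.2 p.2 G) F gs.

Section PermutationsOfNat.
Variables (k : nat) (s : 'S_k).

Lemma pnatE (i : 'I_k) : Defs.pnat s i = val (s i).
Proof. by rewrite /Defs.pnat valK. Qed.

Lemma pnat_ltE j (ltjk : (j < k)%N) : Defs.pnat s j = val (s (Ordinal ltjk)).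
Proof. by rewrite -(pnatE (Ordinal ltjk)). Qed.

Lemma pnat_id j : (k <= j)%N -> Defs.pnat s j = j.
Proof. by move=> lekj; rewrite /Defs.pnat insubF // ltnNge lekj. Qed.

Lemma pnat_lt j : (j < k)%N -> (Defs.pnat s j < k)%N.
Proof. by move=> ltjk; rewrite (pnat_ltE ltjk) ltn_ord. Qed.

Lemma pnat_inj i j : (i < k)%N -> (j < k)%N -> Defs.pnat s i = Defs.pnat s j -> i = j.
Proof.
move=> ltik ltjk; rewrite (pnat_ltE ltik) (pnat_ltE ltjk) => /val_inj /perm_inj.
by case.
Qed.

End PermutationsOfNat.

Lemma pnatM k (s s' : 'S_k) j : Defs.pnat (s * s') j = Defs.pnat s' (Defs.pnat s j).
Proof.
have [ltjk|lekj] := ltnP j k; last by rewrite !pnat_id.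
by rewrite !(pnat_ltE _ ltjk) permM -pnatE.
Qed.

Lemma permv_winE a o k (s : 'S_k) v b i :
  ~~ ((b == a) && (o < i <= o + k)%N) -> permv_win a o s v b i = v b i.
Proof. by rewrite /permv_win => /negbTE ->. Qed.

Lemma permv_win_comm a b o p k l (s : 'S_k) (s' : 'S_l) v : a != b ->
  permv_win a o s (permv_win b p s' v) = permv_win b p s' (permv_win a o s v).
Proof.
move=> neq_ab.
apply: functional_extensionality => c; apply: functional_extensionality => i.
rewrite /permv_win; have [->|neq_ca] /= := eqVneq c a.
  by rewrite (negbTE neq_ab) /=; case: ifP.
by have [->|//] /= := eqVneq c b; rewrite eq_sym (negbTE neq_ab) /=; case: ifP.
Qed.

Lemma SymV_win_comm (R : zmodType) a b o p k l (F : vars -> R) : a != b ->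
  SymV_win a o k (SymV_win b p l F) = SymV_win b p l (SymV_win a o k F).
Proof.
move=> neq_ab; apply: functional_extensionality => v.
rewrite /SymV_win exchange_big /=; apply: eq_bigr => s' _; apply: eq_bigr => s _.
by rewrite permv_win_comm // eq_sym.
Qed.

Lemma SymGroups_win_comm (R : zmodType) gs a o k (F : vars -> R) :
  all (fun p => p.1.1 != a) gs ->
  SymGroups_win gs (SymV_win a o k F) = SymV_win a o k (SymGroups_win gs F).
Proof.
elim: gs => //= p gs IHgs /andP[neq_pa /IHgs ->].
by rewrite SymV_win_comm.
Qed.

Lemma SymV_win0 (R : zmodType) a k (F : vars -> R) : SymV a k F = SymV_win a 0 k F.
Proof.
apply: functional_extensionality => v; apply: eq_bigr => s _; congr F.
apply: functional_extensionality => b; apply: functional_extensionality => i.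
by rewrite /permv /permv_win add0n subn1.
Qed.

Lemma SymGroups_win0 (R : zmodType) (ls : seq nat) (f : nat -> nat) (F : vars -> R) :
  SymGroups [seq (a, f a) | a <- ls] F = SymGroups_win [seq (a, 0%N, f a) | a <- ls] F.
Proof. by elim: ls => //= a ls ->; rewrite SymV_win0. Qed.

Lemma SymV_winZ (R : pzRingType) (V : lmodType R) a o k (c : R) (F : vars -> V) :
  SymV_win a o k (fun t => c *: F t) = fun t => c *: SymV_win a o k F t.
Proof. by apply: functional_extensionality => v; rewrite /SymV_win scaler_sumr. Qed.

Lemma SymV_win_scale_inv (R : pzRingType) (V : lmodType R) a o k
    (X : vars -> R) (L : vars -> V) :
  (forall (s : 'S_k) t, L (permv_win a o s t) = L t) ->
  (fun t => SymV_win a o k X t *: L t) = SymV_win a o k (fun t => X t *: L t).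
Proof.
move=> L_inv; apply: functional_extensionality => v; rewrite /SymV_win scaler_suml.
by apply: eq_bigr => s _; rewrite L_inv.
Qed.

Section WindowExtension.
Variables (o k xi : nat) (le_win : (o + k <= xi)%N) (s : 'S_k).

Definition win_ext (j : nat) : nat :=
  if (o <= j < o + k)%N then (o + Defs.pnat s (j - o))%N else j.

Lemma win_ext_lt j : (j < xi)%N -> (win_ext j < xi)%N.
Proof.
rewrite /win_ext; case: ifP => // /andP[leoj ltj] _.
have := @pnat_lt k s (j - o); lia.
Qed.

Lemma win_ext_inj : injective win_ext.
Proof.
move=> i j; rewrite /win_ext.
case: ifP => wi; case: ifP => wj.
- move=> /addnI /pnat_inj eq_ij.
  have : (i - o = j - o)%N by apply: eq_ij; lia.
  lia.
- have := @pnat_lt k s (i - o); lia.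
- have := @pnat_lt k s (j - o); lia.
- by [].
Qed.

Definition win_ext_ord (j : 'I_xi) : 'I_xi := Ordinal (win_ext_lt (ltn_ord j)).

Lemma win_ext_ord_inj : injective win_ext_ord.
Proof. by move=> i j [] /win_ext_inj /val_inj. Qed.

Definition win_ext_perm : 'S_xi := perm win_ext_ord_inj.

Lemma pnat_win_ext_perm j : Defs.pnat win_ext_perm j = win_ext j.
Proof.
have [ltj|lej] := ltnP j xi; first by rewrite (pnat_ltE _ ltj) permE.
by rewrite pnat_id // /win_ext; case: ifP => //; lia.
Qed.

Lemma permv_win_ext a (sg : 'S_xi) v :
  permv_win a o s (permv_win a 0 sg v) = permv_win a 0 (win_ext_perm * sg) v.
Proof.
apply: functional_extensionality => b; apply: functional_extensionality => i.
rewrite /permv_win; have [->|//] := eqVneq b a.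
rewrite pnatM pnat_win_ext_perm /win_ext /=.
have [wi|wi] := boolP (o < i <= o + k)%N.
  have ltp : (Defs.pnat s (i - o.+1) < k)%N by apply: pnat_lt; lia.
  rewrite ifT; last lia.
  rewrite ifT; last lia.
  rewrite ifT; last lia.
  by rewrite (_ : (i - 1 - o = i - o.+1)%N) ?add0n ?subn1 ?addnS //; lia.
by case: ifP => //= i_in; rewrite ifF //; lia.
Qed.

End WindowExtension.

Lemma SymV_win_absorb (R : zmodType) a o k xi (F : vars -> R) :
  (o + k <= xi)%N ->
  SymV_win a 0 xi (SymV_win a o k F) = fun v => SymV_win a 0 xi F v *+ k`!.
Proof.
move=> le_win; apply: functional_extensionality => v; rewrite /SymV_win.
under eq_bigr => sg _ do under eq_bigr => s _ do rewrite (permv_win_ext le_win).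
rewrite exchange_big /= -card_Sn -sumr_const; apply: eq_bigr => s _.
by rewrite [RHS](reindex_inj (mulgI (win_ext_perm le_win s))).
Qed.

Lemma SymGroups_absorb_windows (R : pzRingType) (V : lmodType R) (ls : seq nat)
    (xi o eta : nat -> nat) (U : vars -> R) (L : vars -> V) :
  uniq ls -> (forall a, a \in ls -> o a + eta a <= xi a)%N ->
  (forall a, a \in ls -> forall (s : 'S_(eta a)) t, L (permv_win a (o a) s t) = L t) ->
  SymGroups [seq (a, xi a) | a <- ls]
     (fun t => SymGroups_win [seq (a, o a, eta a) | a <- ls] U t *: L t)
  = fun t => (\prod_(a <- ls) (eta a)`!%:R) *:
       SymGroups [seq (a, xi a) | a <- ls] (fun t => U t *: L t) t.
Proof.
rewrite !SymGroups_win0.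
elim: ls => [|a ls IHls] /=.
  by move=> *; apply: functional_extensionality => t; rewrite big_nil scale1r.
move=> /andP[a_notin uniq_ls] le_win L_inv.
have [in_a in_ls] : a \in a :: ls /\ {subset ls <= a :: ls}.
  by split=> [|b b_in]; rewrite inE ?eqxx ?b_in ?orbT.
rewrite SymV_win_scale_inv; last exact: L_inv.
rewrite SymGroups_win_comm; last first.
  by rewrite all_map; apply/allP => b b_in /=; apply: contraNneq a_notin => <-.
rewrite IHls // => [|b /in_ls|b /in_ls]; [|exact: le_win|exact: L_inv].
rewrite SymV_win_absorb ?le_win //; apply: functional_extensionality => t.
by rewrite SymV_winZ big_cons -scalerA scaler_nat.
Qed.

Section BetheSupport.
Variables (A : lalgType algC) (T : nat -> nat -> algC -> A) (xi : nat -> nat) (t t' : vars).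
Hypothesis eq_tt' : forall j i, (0 < i <= xi j)%N -> t j i = t' j i.

Lemma Tblock_congr N k j : @Tblock A N k T xi t j = @Tblock A N k T xi t' j.
Proof.
rewrite /Tblock; congr prodop; apply/eq_in_map => i; rewrite mem_iota => i_in.
by rewrite eq_tt' //; lia.
Qed.

Lemma Rblock_congr N k i j : @Rblock A N k xi t i j = @Rblock A N k xi t' i j.
Proof.
rewrite /Rblock; congr (prodop (flatten _)); apply/eq_in_map => p.
rewrite mem_iota => p_in; apply/eq_in_map => l; rewrite mem_rev mem_iota => l_in.
by rewrite !eq_tt' //; lia.
Qed.

Lemma Bethe_congr k : Bethe k T xi t = Bethe k T xi t'.
Proof.
case: k => //= K; rewrite /That; congr (prodop (_ ++ _)); apply: eq_map => ij.
  by rewrite Tblock_congr.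
by rewrite Rblock_congr.
Qed.

End BetheSupport.

Section WindowProducts.
Variables (R : comPzRingType) (H : algC -> R) (t : vars) (a o k xi : nat) (s : 'S_k).
Hypothesis win_end : (o + k = xi)%N.

Lemma prod_permv_win_ord :
  \prod_(i < k) H (permv_win a o s t a (o + i.+1)%N) = \prod_(i < k) H (t a (o + i.+1)%N).
Proof.
rewrite [RHS](reindex_inj (@perm_inj _ s)); apply: eq_bigr => i _.
rewrite /permv_win eqxx ifT; last by have := ltn_ord i; lia.
by rewrite (_ : (o + i.+1 - o.+1 = i)%N) ?pnatE //; lia.
Qed.

Lemma prod_permv_win :
  \prod_(o.+1 <= j < xi.+1) H (permv_win a o s t a j)
  = \prod_(o.+1 <= j < xi.+1) H (t a j).
Proof.
rewrite (big_addn 0 _ o.+1) [RHS](big_addn 0 _ o.+1) !big_mkord.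
rewrite (_ : (xi.+1 - o.+1 = k)%N); last lia.
under eq_bigr => i _ do rewrite addnS addnC -addnS.
under [RHS]eq_bigr => i _ do rewrite addnS addnC -addnS.
exact: prod_permv_win_ord.
Qed.

Lemma prod_permv_win_rev :
  \prod_(0 <= i < k) H (permv_win a o s t a (xi - i)%N)
  = \prod_(0 <= i < k) H (t a (xi - i)%N).
Proof.
rewrite big_nat_rev [RHS]big_nat_rev !big_mkord.
have xi_sub (i : 'I_k) : (xi - (0 + k - i.+1) = o + i.+1)%N by have := ltn_ord i; lia.
under eq_bigr => i _ do rewrite xi_sub.
under [RHS]eq_bigr => i _ do rewrite xi_sub.
exact: prod_permv_win_ord.
Qed.

End WindowProducts.

Lemma Lddot_permv_win (A : lalgType algC) n m T xi x Lam (eta : nat -> nat) a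
    (s : 'S_(eta a)) t :
  @Lddot A n m T xi x Lam eta (permv_win a 0 s t) = @Lddot A n m T xi x Lam eta t.
Proof.
rewrite /Lddot; congr (_ * _ *: _).
- apply: eq_bigr => b _; have [eq_ba|neq_ba] := eqVneq b.+1 a; first subst a.
    have fix_b j : permv_win b.+1 0 s t b j = t b j by rewrite permv_winE //; lia.
    under eq_bigr => i _ do under eq_bigr => j _ do rewrite fix_b.
    apply: (prod_permv_win
              (fun y => \prod_((eta b).+1 <= j < (xi b).+1) ((y - t b j + 1) / (y - t b j)))).
    by rewrite add0n.
  apply: eq_bigr => i _; apply: eq_big_nat => j j_in.
  rewrite (permv_winE _ _ _ (b := b.+1)) ?(negbTE neq_ba) // permv_winE //.
  by case: eqP => //= eq_ba; subst; lia.
- apply: eq_bigr => l _; have [->|neq_la] := eqVneq l a.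
    by apply: (prod_permv_win (fun y => (y - x + Lam a) / (y - x))); rewrite add0n.
  by apply: eq_bigr => i _; rewrite permv_winE // (negbTE neq_la).
- by apply: Bethe_congr => j i i_in; rewrite permv_winE //; case: eqP => //= ->; lia.
Qed.

Lemma Ltilde_permv_win (A : lalgType algC) m T xi x Lam (zeta : nat -> nat) a
    (s : 'S_(zeta a)) t :
  (zeta a <= xi a)%N ->
  @Ltilde A m T xi x Lam zeta (permv_win a (xi a - zeta a) s t)
  = @Ltilde A m T xi x Lam zeta t.
Proof.
move=> le_za; have win_end : (xi a - zeta a + zeta a = xi a)%N by lia.
rewrite /Ltilde; congr (_ * _ *: _).
- apply: eq_bigr => b _; have [->|neq_ba] := eqVneq b a.
    apply: eq_bigr => i _; rewrite (permv_winE _ _ _ (b := a.+1)); last lia.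
    exact: (prod_permv_win (fun y => (t a.+1 i - y + 1) / (t a.+1 i - y))).
  apply: eq_big_nat => i i_in; apply: eq_bigr => j _.
  rewrite (permv_winE _ _ _ (b := b)) ?(negbTE neq_ba) // permv_winE //.
  by case: eqP => //= eq_ba; subst; lia.
- apply: eq_bigr => l _; have [->|neq_la] := eqVneq l a.
    exact: (prod_permv_win_rev (fun y => (y - x + Lam a.+1) / (y - x))).
  by apply: eq_bigr => i _; rewrite permv_winE // (negbTE neq_la).
- apply: Bethe_congr => j i i_in; rewrite permv_winE //.
  by case: eqP => //= eq_ja; subst; lia.
Qed.

Lemma permv_argJ m xi (zeta : nat -> nat) a (s : 'S_(zeta a)) t : (a < m)%N ->
  permv a s (argJ m xi zeta t) = argJ m xi zeta (permv_win a (xi a - zeta a) s t).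
Proof.
move=> lt_am.
apply: functional_extensionality => b; apply: functional_extensionality => i.
rewrite /permv /argJ; have [->|neq_ba] /= := eqVneq b a.
  rewrite lt_am /permv_win eqxx /=.
  have [i_in|i_out] := boolP (0 < i <= zeta a)%N; last by rewrite ifF //; lia.
  rewrite ifT; last lia.
  by rewrite (_ : (xi a - zeta a + i - (xi a - zeta a).+1 = i.-1)%N) ?addnS //; lia.
case: ifP => lt_bm; first by rewrite permv_winE // (negbTE neq_ba).
by case: ifP => _; rewrite permv_winE //; case: eqP => //= eq_ba; lia.
Qed.

Lemma SymGroups_argJ m xi (zeta : nat -> nat) (ls : seq nat) (F : vars -> algC) t :
  all (fun a => a < m)%N ls ->
  SymGroups [seq (a, zeta a) | a <- ls] F (argJ m xi zeta t)
  = SymGroups_win [seq (a, xi a - zeta a, zeta a)%N | a <- ls]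
      (fun t => F (argJ m xi zeta t)) t.
Proof.
elim: ls t => //= a ls IHls t /andP[lt_am lt_lsm].
by apply: eq_bigr => s _; rewrite permv_argJ // IHls.
Qed.

Lemma prod_factV_factK (R : numFieldType) (ls : seq nat) (f : nat -> nat) :
  (\prod_(a <- ls) ((f a)`!%:R)^-1 : R) * \prod_(a <- ls) (f a)`!%:R = 1.
Proof.
by rewrite -big_split big1 // => i _; rewrite /= mulVf // pnatr_eq0 -lt0n fact_gt0.
Qed.

Lemma SymGroups_U_I_Lddot (A : lalgType algC) (n m : nat) (T : nat -> nat -> algC -> A)
    (xi : nat -> nat) (x : algC) (Lam : nat -> algC) (lab : nat -> nat) :
  (forall s, (m < s < n)%N -> (etaI (xi m) lab s <= xi s)%N) ->
  forall t : vars,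
    SymGroups [seq (a, xi a) | a <- iota m.+1 (n - m.+1)]
      (fun t => U_I n m (xi m) lab t *: Lddot n m T xi x Lam (etaI (xi m) lab) t) t
    = (\prod_(m.+1 <= s < n) ((etaI (xi m) lab s)`!%:R)^-1 : algC)
      *: SymGroups [seq (a, xi a) | a <- iota m.+1 (n - m.+1)]
           (fun t => W_I n m (xi m) lab t *: Lddot n m T xi x Lam (etaI (xi m) lab) t) t.
Proof.
move=> le_eta t; rewrite /W_I (SymGroups_win0 _ (etaI (xi m) lab)).
rewrite (@SymGroups_absorb_windows _ _ _ xi (fun=> 0%N)) ?iota_uniq //.
- by rewrite scalerA prod_factV_factK scale1r.
- by move=> a; rewrite mem_iota add0n => a_in; apply: le_eta; lia.
- by move=> a _ s t'; apply: Lddot_permv_win.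
Qed.

Lemma SymGroups_Ut_J_Ltilde (A : lalgType algC) (m : nat) (T : nat -> nat -> algC -> A)
    (xi : nat -> nat) (x : algC) (Lam : nat -> algC) (jl : nat -> nat) :
  (forall s, (0 < s < m)%N -> (zetaJ (xi m) jl s <= xi s)%N) ->
  forall t : vars,
    SymGroups [seq (a, xi a) | a <- iota 1 m.-1]
      (fun t => Ut_J m (xi m) jl (argJ m xi (zetaJ (xi m) jl) t)
                *: Ltilde m T xi x Lam (zetaJ (xi m) jl) t) t
    = (\prod_(1 <= s < m) ((zetaJ (xi m) jl s)`!%:R)^-1 : algC)
      *: SymGroups [seq (a, xi a) | a <- iota 1 m.-1]
           (fun t => Wt_J m (xi m) jl (argJ m xi (zetaJ (xi m) jl) t)
                     *: Ltilde m T xi x Lam (zetaJ (xi m) jl) t) t.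
Proof.
move=> le_zeta t; set zeta := zetaJ (xi m) jl.
have lt_m : all (fun a => a < m)%N (iota 1 m.-1).
  by apply/allP => a; rewrite mem_iota; lia.
have -> : (fun t => Wt_J m (xi m) jl (argJ m xi zeta t) *: Ltilde m T xi x Lam zeta t)
  = fun t => SymGroups_win [seq (a, xi a - zeta a, zeta a)%N | a <- iota 1 m.-1]
               (fun t => Ut_J m (xi m) jl (argJ m xi zeta t)) t
             *: Ltilde m T xi x Lam zeta t.
  by apply: functional_extensionality => t'; rewrite /Wt_J SymGroups_argJ.
rewrite (@SymGroups_absorb_windows _ _ _ xi (fun a => xi a - zeta a)%N) ?iota_uniq //.
- by rewrite scalerA /index_iota subn1 prod_factV_factK scale1r.
- by move=> a; rewrite mem_iota => a_in; rewrite subnK //; apply: le_zeta; lia.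
- by move=> a; rewrite mem_iota => a_in s t'; apply/Ltilde_permv_win/le_zeta; lia.
Qed.

Theorem lemma6p2 (A : lalgType algC) (n m : nat) (T : nat -> nat -> algC -> A)
  (xi : nat -> nat) (x : algC) (Lam : nat -> algC) :
  (1 <= m < n)%N ->
  (forall lab : nat -> nat,
     (forall j, (0 < j <= xi m)%N -> (m < lab j <= n)%N) ->
     (forall s, (m < s < n)%N -> (etaI (xi m) lab s <= xi s)%N) ->
     forall t : vars,
       SymGroups [seq (a, xi a) | a <- iota m.+1 (n - m.+1)]
         (fun t => U_I n m (xi m) lab t *: Lddot n m T xi x Lam (etaI (xi m) lab) t) t
       = (\prod_(m.+1 <= s < n) ((etaI (xi m) lab s)`!%:R)^-1 : algC)
         *: SymGroups [seq (a, xi a) | a <- iota m.+1 (n - m.+1)]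
              (fun t => W_I n m (xi m) lab t *: Lddot n m T xi x Lam (etaI (xi m) lab) t) t)
  /\
  (forall jl : nat -> nat,
     (forall j, (0 < j <= xi m)%N -> (0 < jl j <= m)%N) ->
     (forall s, (0 < s < m)%N -> (zetaJ (xi m) jl s <= xi s)%N) ->
     forall t : vars,
       SymGroups [seq (a, xi a) | a <- iota 1 m.-1]
         (fun t => Ut_J m (xi m) jl (argJ m xi (zetaJ (xi m) jl) t)
                   *: Ltilde m T xi x Lam (zetaJ (xi m) jl) t) t
       = (\prod_(1 <= s < m) ((zetaJ (xi m) jl s)`!%:R)^-1 : algC)
         *: SymGroups [seq (a, xi a) | a <- iota 1 m.-1]
              (fun t => Wt_J m (xi m) jl (argJ m xi (zetaJ (xi m) jl) t)
                        *: Ltilde m T xi x Lam (zetaJ (xi m) jl) t) t).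
Proof.
(* Only the bounds on eta_s and zeta_s matter: the identities hold for any labelling. *)
move=> _; split=> [lab _|jl _].
  exact: SymGroups_U_I_Lddot.
exact: SymGroups_Ut_J_Ltilde.
Qed.
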